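(* Let $(T,A)$ be a uniform cocycle on a probability space $(\Delta,\mu)$ and, for $\kappa>0$, let $$\omega(\kappa)=\sup_{\mu(U)\le\kappa}\ \sup_{N>0}\int_U\frac1N\ln\|A_N(x)\|_0\,d\mu(x),$$ the first supremum being over measurable sets $U\subset\Delta$ with $\mu(U)\le\kappa$. Then $\lim_{\kappa\to0}\omega(\kappa)=0$.
   Context: A cocycle is a pair $(T,A)$ with $T:\Delta\to\Delta$ and $A:\Delta\to\mathrm{GL}(p,\mathbb{R})$, viewed as the skew product $(x,w)\mapsto(T(x),A(x)w)$; its iterates are $(T^n,A_n)$ with $A_n(x)=A(T^{n-1}(x))\cdots A(x)$. For $B\in\mathrm{GL}(p,\mathbb{R})$, $\|B\|_0=\max\{\|B\|,\|B^{-1}\|\}$. The cocycle is a uniform cocycle if $(\Delta,\mu)$ is a probability space, $\mu$ is a $T$-invariant ergodic measure ($T$ measurable), $A$ is measurable and $\int_\Delta\ln\|A(x)\|_0\,d\mu(x)<\infty$. *)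

From HB Require Import structures.
From mathcomp Require Import all_boot all_order all_algebra.
From mathcomp Require Import all_classical all_reals all_analysis.
Set Implicit Arguments. Unset Strict Implicit. Unset Printing Implicit Defensive.
Import Order.TTheory GRing.Theory Num.Theory.
Import numFieldNormedType.Exports.
Local Open Scope classical_set_scope.
Local Open Scope ring_scope.

Section Cocycle.
Context {R : realType}.

Definition vnorm {p : nat} (v : 'cV[R]_p) : R :=
  Num.sqrt (\sum_(i < p) (v i 0) ^+ 2).

Definition opnorm {p : nat} (B : 'M[R]_p) : R :=
  sup [set r | exists v : 'cV[R]_p, vnorm v <= 1 /\ r = vnorm (B *m v)].

Definition norm0 {p : nat} (B : 'M[R]_p) : R :=
  Num.max (opnorm B) (opnorm (invmx B)).

Fixpoint cocycle_iter {X : Type} {p : nat} (T : X -> X) (A : X -> 'M[R]_p)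
    (n : nat) (x : X) : 'M[R]_p :=
  match n with
  | 0 => 1%:M
  | n'.+1 => A (iter n' T x) *m cocycle_iter T A n' x
  end.

End Cocycle.

Section Uniform.
Local Open Scope ereal_scope.
Context {d : measure_display} {X : measurableType d} {R : realType}.

Definition invariant_measure (mu : probability X R) (T : X -> X) : Prop :=
  forall E, measurable E -> mu (T @^-1` E) = mu E.

Definition ergodic (mu : probability X R) (T : X -> X) : Prop :=
  forall E, measurable E -> T @^-1` E = E -> mu E = 0 \/ mu E = 1.

Definition uniform_cocycle {p : nat} (mu : probability X R) (T : X -> X)
    (A : X -> 'M[R]_p) : Prop :=
  measurable_fun setT T /\
  invariant_measure mu T /\
  ergodic mu T /\
  (forall x, A x \in unitmx) /\
  (forall i j, measurable_fun setT (fun x => A x i j)) /\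
  \int[mu]_x (ln (norm0 (A x)))%:E < +oo.

Definition omega {p : nat} (mu : probability X R) (T : X -> X)
    (A : X -> 'M[R]_p) (kappa : R) : \bar R :=
  ereal_sup [set s | exists U, measurable U /\ mu U <= kappa%:E /\
     s = ereal_sup [set t | exists N : nat, (0 < N)%N /\
        t = \int[mu]_(x in U) ((N%:R)^-1 * ln (norm0 (cocycle_iter T A N x)))%:E]].

End Uniform.

(* Subadditivity of ln ||.||_0 along the cocycle bounds (1/N) ln ||A_N(x)||_0 by the
   Birkhoff average of g = ln ||A||_0 over the first N points of the orbit, so
   \int_U (1/N) ln ||A_N||_0 <= sup_k \int_U g o T^k.  Since T preserves mu, the
   functions g o T^k all have the same distribution as the single integrable
   function g, hence they are uniformly integrable: this supremum is small as soon
   as mu(U) is.  As ln ||A||_0 is not obviously measurable, g is replaced by the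
   measurable majorant ln (1 + |A|_1 + |A^-1|_1), which exceeds it by at most a
   constant. *)

From HB Require Import structures.
From mathcomp Require Import all_boot all_order all_algebra.
From mathcomp Require Import all_classical all_reals all_analysis.
From mathcomp Require Import measurable_realfun.
Import Order.TTheory GRing.Theory Num.Theory.
Import numFieldNormedType.Exports.
Local Open Scope classical_set_scope.
Local Open Scope ring_scope.

Section MatrixNorms.
Context {R : realType} {p : nat}.
Implicit Types (B C : 'M[R]_p) (v : 'cV[R]_p).

Lemma vnorm_ge0 v : 0 <= vnorm v.
Proof. exact: sqrtr_ge0. Qed.

Lemma vnorm0 : vnorm (0 : 'cV[R]_p) = 0.
Proof. by rewrite /vnorm big1 ?sqrtr0 // => i _; rewrite mxE expr0n. Qed.

Lemma vnormZ (a : R) v : vnorm (a *: v) = `|a| * vnorm v.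
Proof.
rewrite /vnorm (eq_bigr (fun i => a ^+ 2 * v i 0 ^+ 2)); last first.
  by move=> i _; rewrite mxE exprMn.
by rewrite -mulr_sumr sqrtrM ?sqrtr_sqr // sqr_ge0.
Qed.

Lemma coord_le_vnorm v i : `|v i 0| <= vnorm v.
Proof.
rewrite /vnorm -sqrtr_sqr ler_wsqrtr // (bigD1 i) //= lerDl.
by apply: sumr_ge0 => j _; exact: sqr_ge0.
Qed.

Lemma vnorm_eq0 v : vnorm v = 0 -> v = 0.
Proof.
move=> v0; apply/matrixP => i j; rewrite ord1 mxE; apply/normr0_eq0.
by apply/le_anti; rewrite normr_ge0 andbT -v0 coord_le_vnorm.
Qed.

Lemma vnorm_le_sum_coord v : vnorm v <= \sum_i `|v i 0|.
Proof.
rewrite /vnorm -(@ger0_norm _ (\sum_i `|v i 0|)); last by apply: sumr_ge0.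
rewrite -sqrtr_sqr ler_wsqrtr // expr2 big_distrl /=.
apply: ler_sum => i _; rewrite -[v i 0 ^+ 2]ger0_norm ?sqr_ge0 // normrX expr2.
rewrite ler_wpM2l //.
by rewrite (bigD1 i) //= lerDl; apply: sumr_ge0.
Qed.

Definition l1norm B := \sum_i \sum_j `|B i j|.

Lemma l1norm_ge0 B : 0 <= l1norm B.
Proof. by apply: sumr_ge0 => i _; apply: sumr_ge0. Qed.

Lemma vnorm_mulmx_le_l1norm B v : vnorm v <= 1 -> vnorm (B *m v) <= l1norm B.
Proof.
move=> v1; apply: (le_trans (vnorm_le_sum_coord _)); apply: ler_sum => i _.
rewrite mxE; apply: (le_trans (ler_norm_sum _ _ _)); apply: ler_sum => j _.
by rewrite normrM ler_piMr // (le_trans (coord_le_vnorm v j)).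
Qed.

Lemma opnorm_has_sup B :
  has_sup [set r | exists v : 'cV[R]_p, vnorm v <= 1 /\ r = vnorm (B *m v)].
Proof.
split; first by exists 0, 0; rewrite mulmx0 vnorm0.
by exists (l1norm B) => _ [v [v1 ->]]; exact: vnorm_mulmx_le_l1norm.
Qed.

Lemma opnorm_ub B v : vnorm v <= 1 -> vnorm (B *m v) <= opnorm B.
Proof. by move=> v1; apply: sup_upper_bound (opnorm_has_sup B) _ _; exists v. Qed.

Lemma opnorm_le B c :
  (forall v, vnorm v <= 1 -> vnorm (B *m v) <= c) -> opnorm B <= c.
Proof.
move=> Bc; apply: ge_sup; first by case: (opnorm_has_sup B).
by move=> _ [v [v1 ->]]; exact: Bc.
Qed.

Lemma opnorm_ge0 B : 0 <= opnorm B.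
Proof. by rewrite -vnorm0 -(mulmx0 _ B) opnorm_ub // vnorm0. Qed.

Lemma opnorm_le_l1norm B : opnorm B <= l1norm B.
Proof. exact/opnorm_le/vnorm_mulmx_le_l1norm. Qed.

Lemma vnorm_mulmx_le B v : vnorm (B *m v) <= opnorm B * vnorm v.
Proof.
have [/vnorm_eq0 ->|vn0] := eqVneq (vnorm v) 0.
  by rewrite mulmx0 vnorm0 mulr0.
have vp : 0 < vnorm v by rewrite lt_neqAle eq_sym vn0 vnorm_ge0.
have := opnorm_ub B ((vnorm v)^-1 *: v).
rewrite vnormZ -scalemxAr vnormZ ger0_norm ?invr_ge0 ?vnorm_ge0 // mulVf //.
by move=> /(_ (lexx _)); rewrite ler_pdivrMl // mulrC.
Qed.

Lemma opnormM_le B C : opnorm (B *m C) <= opnorm B * opnorm C.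
Proof.
apply: opnorm_le => v v1; rewrite -mulmxA.
apply: (le_trans (vnorm_mulmx_le _ _)); apply: ler_wpM2l; first exact: opnorm_ge0.
by apply: (le_trans (vnorm_mulmx_le _ _)); rewrite ler_piMr // opnorm_ge0.
Qed.

Lemma entry_le_opnorm B i j : `|B i j| <= opnorm B.
Proof.
have e_j : vnorm (delta_mx j 0 : 'cV[R]_p) = 1.
  rewrite /vnorm (bigD1 j) //= big1 ?addr0; first by rewrite mxE !eqxx expr1n sqrtr1.
  by move=> k /negPf kj; rewrite mxE kj expr0n.
have := opnorm_ub B (delta_mx j 0); rewrite -colE e_j => /(_ (lexx _)).
by apply: le_trans; have := coord_le_vnorm (col j B) i; rewrite mxE.
Qed.

Lemma l1norm_le_opnorm B : l1norm B <= (p * p)%:R * opnorm B.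
Proof.
apply: (@le_trans _ _ (\sum_(i < p) \sum_(j < p) opnorm B)).
  by apply: ler_sum => i _; apply: ler_sum => j _; exact: entry_le_opnorm.
by rewrite !sumr_const !card_ord -mulrnA mulr_natl.
Qed.

Lemma opnorm_dim0 B : p = 0%N -> opnorm B = 0.
Proof.
move=> p0; apply/le_anti; rewrite opnorm_ge0 andbT; apply: opnorm_le => v _.
by rewrite /vnorm big1 ?sqrtr0 // => i; have := ltn_ord i; rewrite [X in (_ < X)%N]p0.
Qed.

Lemma invmxM B C : B \in unitmx -> C \in unitmx ->
  invmx (B *m C) = invmx C *m invmx B.
Proof.
move=> uB uC; have uBC : B *m C \in unitmx by rewrite unitmx_mul uB uC.
have BC_inv : (B *m C) *m (invmx C *m invmx B) = 1%:M.
  by rewrite mulmxA -(mulmxA B) mulmxV // mulmx1 mulmxV.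
by rewrite -[RHS]mul1mx -(mulVmx uBC) -mulmxA BC_inv mulmx1.
Qed.

Lemma norm0_ge0 B : 0 <= norm0 B.
Proof. by rewrite le_max opnorm_ge0. Qed.

Lemma opnorm_le_norm0 B : opnorm B <= norm0 B.
Proof. by rewrite le_max lexx. Qed.

Lemma opnorm_inv_le_norm0 B : opnorm (invmx B) <= norm0 B.
Proof. by rewrite le_max lexx orbT. Qed.

Lemma norm0M_le B C : B \in unitmx -> C \in unitmx ->
  norm0 (B *m C) <= norm0 B * norm0 C.
Proof.
move=> uB uC; rewrite /norm0 invmxM // ge_max; apply/andP; split.
  apply: (le_trans (opnormM_le _ _)).
  by apply: ler_pM; rewrite ?opnorm_ge0 ?opnorm_le_norm0.
apply: (le_trans (opnormM_le _ _)); rewrite mulrC.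
by apply: ler_pM; rewrite ?opnorm_ge0 ?opnorm_inv_le_norm0.
Qed.

Lemma norm0_dim0 B : p = 0%N -> norm0 B = 0.
Proof. by move=> p0; rewrite /norm0 !opnorm_dim0 // maxxx. Qed.

Lemma norm0_ge1 B : (0 < p)%N -> B \in unitmx -> 1 <= norm0 B.
Proof.
move=> p_gt0 uB; have o := Ordinal p_gt0.
have opnorm1_ge1 : 1 <= opnorm (1%:M : 'M[R]_p).
  by have := entry_le_opnorm 1%:M o o; rewrite mxE eqxx normr1.
have : 1 <= norm0 B ^+ 2.
  rewrite (le_trans opnorm1_ge1) // -(mulmxV uB) expr2.
  apply: (le_trans (opnormM_le _ _)).
  by apply: ler_pM; rewrite ?opnorm_ge0 ?opnorm_le_norm0 ?opnorm_inv_le_norm0.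
by rewrite -{1}(expr1n _ 2) ler_pXn2r // ?nnegrE ?norm0_ge0.
Qed.

Lemma norm0_gt0 B : (0 < p)%N -> B \in unitmx -> 0 < norm0 B.
Proof. by move=> p_gt0 uB; rewrite (lt_le_trans ltr01) ?norm0_ge1. Qed.

Lemma ln_norm0_ge0 B : B \in unitmx -> 0 <= ln (norm0 B).
Proof.
move=> uB; have [p0|p_gt0] := posnP p; first by rewrite norm0_dim0 // ln0.
exact/ln_ge0/norm0_ge1.
Qed.

Lemma ln_norm0M_le B C : B \in unitmx -> C \in unitmx ->
  ln (norm0 (B *m C)) <= ln (norm0 B) + ln (norm0 C).
Proof.
move=> uB uC; have [p0|p_gt0] := posnP p.
  by rewrite !norm0_dim0 // ln0 // addr0.
have uBC : B *m C \in unitmx by rewrite unitmx_mul uB uC.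
rewrite -lnM ?posrE ?norm0_gt0 // ler_ln ?posrE ?norm0M_le ?norm0_gt0 //.
by rewrite mulr_gt0 ?norm0_gt0.
Qed.

Definition ln_l1norm0 B := ln (1 + l1norm B + l1norm (invmx B)).

Lemma ln_l1norm0_ge0 B : 0 <= ln_l1norm0 B.
Proof. by apply: ln_ge0; rewrite -addrA lerDl addr_ge0 ?l1norm_ge0. Qed.

Lemma ln_norm0_le_ln_l1norm0 B : B \in unitmx -> ln (norm0 B) <= ln_l1norm0 B.
Proof.
move=> uB; have [p0|p_gt0] := posnP p.
  by rewrite norm0_dim0 // ln0 // ln_l1norm0_ge0.
rewrite /ln_l1norm0 ler_ln ?posrE ?norm0_gt0 //; last first.
  by rewrite -addrA ltr_pwDl // addr_ge0 ?l1norm_ge0.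
rewrite /norm0 ge_max -!addrA; apply/andP; split.
  by rewrite ler_wpDl // ler_wpDr ?l1norm_ge0 ?opnorm_le_l1norm.
by rewrite ler_wpDl // ler_wpDl ?l1norm_ge0 ?opnorm_le_l1norm.
Qed.

Lemma ln_l1norm0_le B : B \in unitmx ->
  ln_l1norm0 B <= ln (norm0 B) + ln (1 + 2 * (p * p)%:R).
Proof.
move=> uB.
have l1_le : l1norm B + l1norm (invmx B) <= 2 * (p * p)%:R * norm0 B.
  apply: le_trans (lerD (l1norm_le_opnorm _) (l1norm_le_opnorm _)) _.
  rewrite -mulrA [X in _ <= X]mulr_natl mulr2n.
  by apply: lerD; rewrite ler_wpM2l ?opnorm_le_norm0 ?opnorm_inv_le_norm0.
have [p0|p_gt0] := posnP p.
  move: l1_le; rewrite /ln_l1norm0 norm0_dim0 // [ln 0]ln0 // add0r mulr0 => l1_le0.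
  rewrite ler_ln ?posrE -?addrA ?ltr_pwDl ?addr_ge0 ?l1norm_ge0 ?mulr_ge0 //.
  by rewrite lerD2l (le_trans l1_le0) ?mulr_ge0.
rewrite addrC -lnM ?posrE ?norm0_gt0 //.
rewrite ler_ln ?posrE ?mulr_gt0 ?norm0_gt0 ?ltr_pwDl ?mulr_ge0 ?l1norm_ge0 //.
by rewrite -addrA mulrDl mul1r lerD ?norm0_ge1.
Qed.

End MatrixNorms.

Section CocycleIter.
Context {R : realType} {p : nat} {X : Type} (T : X -> X) (A : X -> 'M[R]_p).
Hypothesis A_unit : forall x, A x \in unitmx.

Lemma cocycle_iter_unit n x : cocycle_iter T A n x \in unitmx.
Proof. by elim: n => [|n IH] /=; rewrite ?unitmx1 // unitmx_mul A_unit IH. Qed.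

Lemma ln_norm0_cocycle_iter_le n x :
  ln (norm0 (cocycle_iter T A n x)) <= \sum_(k < n) ln (norm0 (A (iter k T x))).
Proof.
elim: n => [|n IH] /=.
  by rewrite big_ord0 /norm0 invmx1 maxxx ln_le0 // opnorm_le // => v; rewrite mul1mx.
rewrite big_ord_recr /= addrC.
apply: le_trans (ln_norm0M_le _ _ (A_unit _) (cocycle_iter_unit n x)) _.
by rewrite lerD2l.
Qed.

End CocycleIter.

Section MeasurableMatrix.
Context {d : measure_display} {X : measurableType d} {R : realType}.

Lemma measurable_det n (F : X -> 'M[R]_n) :
  (forall i j, measurable_fun setT (fun x => F x i j)) ->
  measurable_fun setT (fun x => \det (F x)).
Proof.
move=> mF; apply: measurable_sum => s; apply: measurable_funM => //.
by apply: measurable_prod => i _; exact: mF.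
Qed.

Lemma measurable_adj n (F : X -> 'M[R]_n) :
  (forall i j, measurable_fun setT (fun x => F x i j)) ->
  forall i j, measurable_fun setT (fun x => \adj (F x) i j).
Proof.
move=> mF i j; under eq_fun do rewrite mxE /cofactor.
apply: measurable_funM => //; apply: measurable_det => k l.
by under eq_fun do rewrite !mxE; exact: mF.
Qed.

(* [|x^-1| = expR (- ln |x|)] for [x != 0] sidesteps the measurability of inversion. *)
Lemma measurable_invmx_entry_norm {n} {F : X -> 'M[R]_n} :
  (forall x, F x \in unitmx) ->
  (forall i j, measurable_fun setT (fun x => F x i j)) ->
  forall i j, measurable_fun setT (fun x => `|invmx (F x) i j|).
Proof.
move=> uF mF i j.
have inv_entry x : `|invmx (F x) i j| = `|\adj (F x) i j| * expR (- ln `|\det (F x)|).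
  rewrite /invmx uF mxE normrM mulrC normfV expRN lnK //.
  by rewrite posrE normr_gt0 -unitfE -unitmxE.
rewrite (funext inv_entry); apply: measurable_funM.
  by apply: measurableT_comp => //; exact: measurable_adj.
apply: measurableT_comp; first exact: measurable_expR.
apply: measurable_funN; apply: measurableT_comp; first exact: measurable_ln.
by apply: measurableT_comp => //; exact: measurable_det.
Qed.

Lemma measurable_ln_l1norm0 {p} {A : X -> 'M[R]_p} :
  (forall x, A x \in unitmx) ->
  (forall i j, measurable_fun setT (fun x => A x i j)) ->
  measurable_fun setT (fun x => ln_l1norm0 (A x)).
Proof.
move=> uA mA; apply: measurableT_comp; first exact: measurable_ln.
apply: measurable_funD; first apply: measurable_funD => //.
- apply: measurable_sum => i; apply: measurable_sum => j.
  by apply: measurableT_comp => //; exact: mA.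
- apply: measurable_sum => i; apply: measurable_sum => j.
  exact: measurable_invmx_entry_norm.
Qed.

End MeasurableMatrix.

Section Integrals.
Local Open Scope ereal_scope.
Context {d : measure_display} {X : measurableType d} {R : realType}.

(* [\int] is a difference of suprema over simple functions below the positive
   and negative parts, so it is monotone even for non-measurable integrands. *)
Lemma le_integral_nonmeas (mu : {measure set X -> \bar R}) D (f g : X -> \bar R) :
  (forall x, D x -> f x <= g x) ->
  \int[mu]_(x in D) f x <= \int[mu]_(x in D) g x.
Proof.
move=> fg; have fg_patch x : (f \_ D) x <= (g \_ D) x.
  by rewrite /patch; case: ifPn => // /set_mem /fg.
apply: leeB; apply: ereal_sup_le => _ [h /= hf <-]; exists h => //= x.
  by apply: le_trans (hf x) _; apply: (@funepos_le _ _ setT) => //; exact: in_setT.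
by apply: le_trans (hf x) _; apply: (@funeneg_le _ _ setT) => //; exact: in_setT.
Qed.

Lemma integral_excess_small (mu : {measure set X -> \bar R}) (G : X -> R) :
  measurable_fun setT G -> (forall x, (0 <= G x)%R) ->
  \int[mu]_x (G x)%:E < +oo ->
  forall e : R, (0 < e)%R ->
  exists M : nat, \int[mu]_x (Num.max (G x - M%:R) 0)%:E <= e%:E.
Proof.
move=> mG G0 G_fin e e0.
pose excess (n : nat) x := Num.max (G x - n%:R)%R 0%R.
have m_excess n : measurable_fun setT (excess n).
  by apply: measurable_maxr => //; exact: measurable_funB.
have excess_ge0 n x : (0 <= excess n x)%R by rewrite le_max lexx orbT.
have : \int[mu]_x (excess n x)%:E @[n --> \oo] --> 0.
  rewrite -(integral0 mu setT).
  apply: (@dominated_cvg _ _ _ mu setT measurableT (fun n x => (excess n x)%:E)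
     (cst 0) (fun x => (G x)%:E)) => //.
  - by move=> n; apply/measurable_EFinP.
  - move=> x _; apply: cvg_near_cst; near=> n.
    rewrite /excess max_r // subr_le0; near: n; exact: nbhs_infty_ger.
  - apply/integrableP; split; first exact/measurable_EFinP.
    by under eq_integral do rewrite gee0_abs ?lee_fin //.
  - move=> n x _; rewrite gee0_abs ?lee_fin // ge_max G0 andbT.
    by rewrite lerBlDr lerDl.
move/fine_cvgP => [excess_fin /cvgrPdist_le /(_ e e0)].
move=> /(filterI excess_fin)/filter_ex[M [M_fin]]; exists M.
by rewrite -(fineK M_fin) lee_fin (le_trans (ler_norm _)) // -normrN -sub0r.
Unshelve. all: by end_near.
Qed.

Lemma integral_lty_le_addc (mu : probability X R) (f : X -> R) (G : X -> R) (c : R) :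
  measurable_fun setT G -> (forall x, (0 <= G x)%R) -> (0 <= c)%R ->
  (forall x, (0 <= f x)%R) -> (forall x, (G x <= f x + c)%R) ->
  \int[mu]_x (f x)%:E < +oo -> \int[mu]_x (G x)%:E < +oo.
Proof.
move=> mG G0 c0 f0 Gfc f_fin.
have m_excess : measurable_fun setT (fun x => Num.max (G x - c)%R 0%R).
  by apply: measurable_maxr => //; exact: measurable_funB.
have excess_le : \int[mu]_x (Num.max (G x - c) 0)%:E <= \int[mu]_x (f x)%:E.
  by apply: le_integral_nonmeas => x _; rewrite lee_fin ge_max f0 andbT lerBlDr.
have : \int[mu]_x (G x)%:E <= \int[mu]_x ((Num.max (G x - c) 0)%:E + c%:E).
  apply: ge0_le_integral => //.
  - by move=> x _; rewrite lee_fin.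
  - exact/measurable_EFinP.
  - by apply: emeasurable_funD => //; exact/measurable_EFinP.
  - by move=> x _; rewrite -EFinD lee_fin -lerBlDr le_max lexx.
rewrite ge0_integralD //; last 2 first.
- by move=> x _; rewrite lee_fin le_max lexx orbT.
- exact/measurable_EFinP.
rewrite integral_cst // => /le_lt_trans; apply; apply: lte_add_pinfty.
  exact: le_lt_trans excess_le f_fin.
by rewrite lte_mul_pinfty ?lee_fin // (le_lt_trans (probability_le1 _ _)) ?ltry.
Qed.

End Integrals.

Section MeasurePreserving.
Local Open Scope ereal_scope.
Context {d : measure_display} {X : measurableType d} {R : realType}.
Variables (mu : probability X R) (T : X -> X).
Hypotheses (mT : measurable_fun setT T) (T_inv : invariant_measure mu T).

Lemma measurable_iter k : measurable_fun setT (iter k T).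
Proof. by elim: k => [|k IH] /=; [exact: measurable_id | exact: measurableT_comp]. Qed.

Lemma invariant_measure_iter k E : measurable E -> mu (iter k T @^-1` E) = mu E.
Proof.
elim: k E => [//|k IH] E mE.
have mTE : measurable (T @^-1` E) by rewrite -[_ @^-1` _]setTI; exact: mT.
by rewrite [iter k.+1 T @^-1` E]/(iter k T @^-1` (T @^-1` E)) IH ?T_inv.
Qed.

Lemma ge0_integral_iter k (g : X -> \bar R) :
  measurable_fun setT g -> (forall x, 0 <= g x) ->
  \int[mu]_x g (iter k T x) = \int[mu]_x g x.
Proof.
move=> mg g0.
have := ge0_integral_pushforward (measurable_iter k) mu measurableT mg (fun y _ => g0 y).
rewrite preimage_setT => <-.
apply: (eq_measure_integral mu); first exact: measurable_iter.
by move=> ? E mE _; rewrite /= /pushforward invariant_measure_iter.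
Qed.

(* Split [G] at height [M]: the part below [M] costs at most [M mu(U)], and the
   excess above [M] has the same integral along every orbit step. *)
Lemma uniformly_integrable_iter (G : X -> R) :
  measurable_fun setT G -> (forall x, (0 <= G x)%R) ->
  \int[mu]_x (G x)%:E < +oo ->
  forall e : R, (0 < e)%R -> exists2 del : R, (0 < del)%R &
   forall U, measurable U -> mu U <= del%:E -> forall k,
     \int[mu]_(x in U) (G (iter k T x))%:E <= e%:E.
Proof.
move=> mG G0 G_fin e e0.
have [|M excess_le] := integral_excess_small mu G mG G0 G_fin (e / 2)%R.
  by rewrite divr_gt0.
pose excess x := Num.max (G x - M%:R)%R 0%R.
have m_excess : measurable_fun setT excess.
  by apply: measurable_maxr => //; exact: measurable_funB.
have excess_ge0 x : (0 <= excess x)%R by rewrite le_max lexx orbT.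
have M1_gt0 : (0 < M%:R + 1 :> R)%R by rewrite ltr_wpDl.
exists (e / 2 / (M%:R + 1))%R; first by rewrite !divr_gt0.
move=> U mU muU k.
have m_excess_k : measurable_fun setT (excess \o iter k T).
  exact: measurableT_comp m_excess (measurable_iter k).
apply: (@le_trans _ _ (\int[mu]_(x in U) ((M%:R)%:E + (excess (iter k T x))%:E))).
  apply: ge0_le_integral => //.
  - by move=> x _; rewrite lee_fin.
  - apply/measurable_EFinP; apply: measurable_funTS.
    exact: measurableT_comp mG (measurable_iter k).
  - by apply: emeasurable_funD => //; apply/measurable_EFinP; exact: measurable_funTS.
  - by move=> x _; rewrite -EFinD lee_fin -lerBlDl le_max lexx.
rewrite ge0_integralD //; last 2 first.
- by move=> x _; rewrite lee_fin.
- by apply/measurable_EFinP; exact: measurable_funTS.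
rewrite integral_cst // [e]splitr EFinD; apply: leeD.
  apply: (@le_trans _ _ ((M%:R)%:E * (e / 2 / (M%:R + 1))%:E)).
    by apply: lee_wpmul2l; rewrite // lee_fin.
  rewrite -EFinM lee_fin mulrC -!mulrA ler_pM2l // ler_piMr //.
  by rewrite mulrC ler_pdivrMr // mul1r lerDl.
apply: le_trans excess_le.
rewrite -(ge0_integral_iter k (fun x => (excess x)%:E)); last 2 first.
- exact/measurable_EFinP.
- by move=> x; rewrite lee_fin.
apply: ge0_subset_integral => //.
- exact/measurable_EFinP.
- by move=> x _; rewrite lee_fin.
Qed.

End MeasurePreserving.

Lemma cvge0_near_le {R : realType} {U : Type} {F : set_system U} {FF : Filter F}
    (f : U -> \bar R) :
  (\forall x \near F, (0 <= f x)%E) ->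
  (forall e : R, 0 < e -> \forall x \near F, (f x <= e%:E)%E) ->
  f @ F --> 0%E.
Proof.
move=> f_ge0 f_small; apply/fine_cvgP; split.
  apply: filterS2 f_ge0 (f_small 1 ltr01) => x f0 f1.
  by rewrite ge0_fin_numE // (le_lt_trans f1) ?ltry.
apply/cvgrPdist_le => e e0; apply: filterS2 f_ge0 (f_small e e0) => x f0 fe.
rewrite /= sub0r normrN ger0_norm ?fine_ge0 //.
by rewrite -lee_fin fineK // ge0_fin_numE // (le_lt_trans fe) ?ltry.
Qed.

Section Omega.
Local Open Scope ereal_scope.
Context {d : measure_display} {X : measurableType d} {R : realType} {p : nat}.
Context {mu : probability X R} {T : X -> X} {A : X -> 'M[R]_p}.

Lemma omega_ge0 kappa : (0 <= kappa)%R -> 0 <= omega mu T A kappa.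
Proof.
move=> kappa0; apply: le_ereal_sup_tmp; eexists.
  by exists set0; split; [exact: measurable0 | split; [rewrite measure0 lee_fin | ]].
apply: le_ereal_sup_tmp; exists 0 => //.
by exists 1%N; split => //; rewrite integral_set0.
Qed.

Hypotheses (A_unit : forall x, A x \in unitmx)
  (mA : forall i j, measurable_fun setT (fun x => A x i j))
  (mT : measurable_fun setT T).

Lemma integral_ln_norm0_cocycle_iter_le {U : set X} N :
  measurable U ->
  \int[mu]_(x in U) (N%:R^-1 * ln (norm0 (cocycle_iter T A N x)))%:E <=
  (N%:R^-1)%:E * \sum_(k < N) \int[mu]_(x in U) (ln_l1norm0 (A (iter k T x)))%:E.
Proof.
move=> mU; have mG := measurable_ln_l1norm0 A_unit mA.
have mGk k : measurable_fun U (fun x => ln_l1norm0 (A (iter k T x))).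
  exact: measurable_funTS (measurableT_comp mG (measurable_iter T mT k)).
apply: (@le_trans _ _ (\int[mu]_(x in U) ((N%:R^-1)%:E *
    \sum_(k < N) (ln_l1norm0 (A (iter k T x)))%:E))).
  apply: le_integral_nonmeas => x _.
  rewrite sumEFin -EFinM lee_fin ler_wpM2l ?invr_ge0 //.
  apply: le_trans (ln_norm0_cocycle_iter_le T A A_unit N x) _.
  by apply: ler_sum => k _; exact: ln_norm0_le_ln_l1norm0.
rewrite ge0_integralZl_EFin ?invr_ge0 //; last 2 first.
- by move=> x _; rewrite sumEFin lee_fin; apply: sumr_ge0 => k _; exact: ln_l1norm0_ge0.
- by apply: emeasurable_sum => k; apply/measurable_EFinP; exact: mGk.
rewrite ge0_integral_sum // => [k|k x _]; first exact/measurable_EFinP.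
by rewrite lee_fin ln_l1norm0_ge0.
Qed.

Hypotheses (T_inv : invariant_measure mu T)
  (lnA_fin : \int[mu]_x (ln (norm0 (A x)))%:E < +oo).

Lemma integral_ln_l1norm0_lty :
  \int[mu]_x (ln_l1norm0 (A x))%:E < +oo.
Proof.
apply: (integral_lty_le_addc _ (fun x => ln (norm0 (A x))) _ (ln (1 + 2 * (p * p)%:R))).
- exact: measurable_ln_l1norm0.
- by move=> x; exact: ln_l1norm0_ge0.
- by rewrite ln_ge0 // lerDl mulr_ge0.
- by move=> x; exact: ln_norm0_ge0.
- by move=> x; exact: ln_l1norm0_le.
- exact: lnA_fin.
Qed.

Lemma omega_small (e : R) : (0 < e)%R -> exists2 del : R, (0 < del)%R &
  forall kappa, (kappa <= del)%R -> omega mu T A kappa <= e%:E.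
Proof.
move=> e0.
have [del del0 G_small] := uniformly_integrable_iter mu T mT T_inv _
  (measurable_ln_l1norm0 A_unit mA) (fun x => ln_l1norm0_ge0 (A x))
  integral_ln_l1norm0_lty e e0.
exists del => // kappa kappa_le.
apply: ge_ereal_sup => _ [U [mU [muU ->]]].
apply: ge_ereal_sup => _ [N [N_gt0 ->]].
apply: le_trans (integral_ln_norm0_cocycle_iter_le N mU) _.
have muU_le : mu U <= del%:E by rewrite (le_trans muU) ?lee_fin.
have sum_le : \sum_(k < N) \int[mu]_(x in U) (ln_l1norm0 (A (iter k T x)))%:E <=
    \sum_(k < N) e%:E by apply: lee_sum => k _; exact: G_small.
apply: le_trans (lee_wpmul2l _ sum_le) _; first by rewrite lee_fin invr_ge0.
rewrite sumEFin -EFinM lee_fin sumr_const card_ord -[(e *+ N)%R]mulr_natr.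
by rewrite mulrCA mulVf ?mulr1 // pnatr_eq0 -lt0n.
Qed.

End Omega.

Theorem lemma2p2 (d : measure_display) (X : measurableType d) (R : realType)
  (p : nat) (mu : probability X R) (T : X -> X) (A : X -> 'M[R]_p) :
  uniform_cocycle mu T A ->
  omega mu T A kappa @[kappa --> 0^'+] --> 0%E.
Proof.
move=> [mT [T_inv [_ [A_unit [mA lnA_fin]]]]].
apply: cvge0_near_le => [|e e0].
  by near=> kappa; apply/omega_ge0/ltW; near: kappa; exact: nbhs_right_gt.
have [del del0 omega_le] := omega_small A_unit mA mT T_inv lnA_fin e e0.
by near=> kappa; apply: omega_le; near: kappa; exact: nbhs_right_le.
Unshelve. all: by end_near.
Qed.
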